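(* Consider a surviving Galton--Watson fractal model with initial set $J_0$ and contraction ratio $\rho$. If $r\ge \operatorname{diam}(J_0)\rho^n$, then $\operatorname{Fav}(S(r))\ge\operatorname{Fav}(S_n)$. If $0<r\le\varepsilon\rho^n$, then $\operatorname{Fav}(S(r))\le(1+O(\varepsilon))\operatorname{Fav}(S_n)$, where the implicit constant depends only on the model.
   Context: Galton--Watson (GW) fractal model: let $J_0\subset\mathbb{R}^2$ be a compact set equal to the closure of its interior, with finitely many connected components. Let $\mathfrak X=(\mathbf L;h_1(J_0),\dots,h_{\mathbf L}(J_0))$ be a random variable where $\mathbf L\in\{0,1,2,\dots\}$ is bounded, each $h_i$ is a homothety with contraction ratio $\rho\in(0,1)$ and $h_i(J_0)\subset J_0$, and $\mathbb{E}[\mathbf L]=\rho^{-1}$. Set $\mathcal{S}_0=\{J_0\}$, $S_0=J_0$; given $\mathcal{S}_n$, for each $R\in\mathcal{S}_n$ take an independent realization of $\mathfrak X$ and let $\mathcal{S}_{n+1}$ consist of the images $g_R(h^R_i(J_0))$ where $g_R$ is the homothety with $g_R(J_0)=R$; $S_{n+1}=\bigcup\mathcal{S}_{n+1}$, $S=\bigcap_nS_n$, and $S(r)$ is the $r$-neighbourhood of $S$. The model is surviving if $\mathbf L\ge1$ almost surely. $\operatorname{Fav}(A)=\int_0^\pi|\operatorname{proj}_\theta A|\,d\theta$ with $\operatorname{proj}_\theta(x)=\langle x,(-\sin\theta,\cos\theta)\rangle$. *)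

From HB Require Import structures.
From mathcomp Require Import all_boot all_order all_algebra.
From mathcomp Require Import all_classical all_reals all_analysis.
Set Implicit Arguments. Unset Strict Implicit. Unset Printing Implicit Defensive.
Import Order.TTheory GRing.Theory Num.Theory.
Import numFieldNormedType.Exports.
Local Open Scope classical_set_scope.
Local Open Scope ring_scope.

Section GW.
Variable R : realType.
Notation P2 := (R * R)%type.

Definition edist (x y : P2) : R :=
  Num.sqrt ((x.1 - y.1) ^+ 2 + (x.2 - y.2) ^+ 2).

Definition diam (A : set P2) : R :=
  sup [set edist x y | x in A & y in A].

(* closed r-neighbourhood { x | dist(x, A) <= r } (A compact below) *)
Definition nbhd_set (A : set P2) (r : R) : set P2 :=
  [set x | exists2 s, A s & edist x s <= r].

Definition proj (t : R) (x : P2) : R := - sin t * x.1 + cos t * x.2.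

Definition Fav (A : set P2) : \bar R :=
  (\int[@lebesgue_measure R]_(t in `[0%R, pi]) (@lebesgue_measure R) (proj t @` A))%E.

Definition homot (c : R) (v : P2) (x : P2) : P2 := (c * x.1 + v.1, c * x.2 + v.2).

(* A configuration (realization of the random variable X) is the list of
   translation vectors t_1..t_L of the homotheties h_i(x) = rho x + t_i;
   L is its size. A realization of the whole construction assigns an
   (independent) configuration conf w to every node (word) w. *)
Definition config := seq P2.

(* translation part T_w of g_w, where g_w(x) = rho^|w| x + T_w and
   g_{w++[i]} = g_w o h_i^{conf w} *)
Fixpoint transl_rev (rho : R) (conf : seq nat -> config) (w : seq nat) : P2 :=
  match w with
  | [::] => (0, 0)
  | i :: u =>
      let T := transl_rev rho conf u in
      let t := nth (0, 0) (conf (rev u)) i in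
      homot (rho ^+ size u) T t
  end.
(* words stored in reverse order (last letter first) *)
Fixpoint valid_rev (conf : seq nat -> config) (w : seq nat) : bool :=
  match w with
  | [::] => true
  | i :: u => (i < size (conf (rev u)))%N && valid_rev conf u
  end.

Definition gmap (rho : R) (conf : seq nat -> config) (w : seq nat) (x : P2) : P2 :=
  homot (rho ^+ size w) (transl_rev rho conf (rev w)) x.

Definition Sn (J0 : set P2) (rho : R) (conf : seq nat -> config) (n : nat) : set P2 :=
  \bigcup_(w in [set w : seq nat | size w = n /\ valid_rev conf (rev w)])
     (gmap rho conf w @` J0).

Definition Slim (J0 : set P2) (rho : R) (conf : seq nat -> config) : set P2 :=
  \bigcap_(n in [set: nat]) Sn J0 rho conf n.

End GW.

From Pilot Require Import Defs.
From HB Require Import structures.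
From mathcomp Require Import all_boot all_order all_algebra.
From mathcomp Require Import all_classical all_reals all_analysis.
From mathcomp Require Import ring lra.
Import Order.TTheory GRing.Theory Num.Theory.
Import numFieldNormedType.Exports.
Local Open Scope classical_set_scope.
Local Open Scope ring_scope.
Set Implicit Arguments. Unset Strict Implicit. Unset Printing Implicit Defensive.

(* For [r >= diam J0 * rho^n], every piece [g_w(J0)] of generation [n]
   contains a point of [S] (a limit of the nested pieces along [w 0 0 0 ...])
   and has diameter [rho^n * diam J0], so [S_n] lies in [S(r)].
   For the upper bound, the finitely many components of [J0] all contain balls
   of a common radius [e]; hence in every direction the projection of [S_n] is
   a finite union of intervals of length at least [L = 2 e rho^n], and the
   projection of [S(r)] lies in the [r]-neighbourhood of that union.  Merging
   intersecting intervals shows that this neighbourhood has measure at most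
   [(1 + 2 r / L)] times the measure of the union, whence [C = 1 / e].  The
   integrals over the direction are compared pointwise, without measurability
   in the direction. *)

Lemma in_bigsetU_seq (T : Type) (s : seq (set T)) x :
  (\big[setU/set0]_(A <- s) A) x <-> exists2 A, A \in s & A x.
Proof.
elim: s => [|A s IH]; first by rewrite big_nil; split => // [[]].
rewrite big_cons; split => [[Ax|/IH [B Bs Bx]]|[B]].
- by exists A => //; rewrite mem_head.
- by exists B => //; rewrite in_cons Bs orbT.
- rewrite in_cons => /orP[/eqP -> Ax|Bs Bx]; first by left.
  by right; apply/IH; exists B.
Qed.

Section LongIntervals.
Variable R : realType.
Local Notation lam := (@lebesgue_measure R).

(* [lam] is the outer measure on all of [set R]: projections need not be
   measurable. *)
Lemma lebesgue_measure_le (A B : set R) : A `<=` B -> (lam A <= lam B)%E.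
Proof. exact: (le_outer_measure lam). Qed.

Lemma lebesgue_measureU2_le (A B : set R) : (lam (A `|` B) <= lam A + lam B)%E.
Proof. exact: (outer_measureU2 lam). Qed.

Definition long_interval (L : R) (A : set R) := exists a b : R,
  [/\ L <= b - a, [set` `]a, b[%R] `<=` A & A `<=` [set` `[a, b]%R]].

Definition thicken (U : set R) (r : R) := [set x | exists2 y, U y & `|x - y| <= r].

Lemma thickenU U V r : thicken (U `|` V) r = thicken U r `|` thicken V r.
Proof.
apply/seteqP; split => x; first by move=> [y [Uy|Vy] xy]; [left|right]; exists y.
by move=> [[y Uy xy]|[y Vy xy]]; exists y => //; [left|right].
Qed.

Lemma thicken0 r : thicken set0 r = set0.
Proof. by apply/seteqP; split => x // [y]. Qed.

Lemma long_interval_is_interval L A : long_interval L A -> is_interval A.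
Proof.
move=> [a [b [_ sab sA]]] x y Ax Ay z /andP[].
rewrite le_eqVlt => /predU1P[<- //|xz]; rewrite le_eqVlt => /predU1P[-> //|zy].
move: (sA x Ax) (sA y Ay); rewrite /= !in_itv /= => /andP[ax _] /andP[_ yb].
by apply: sab; rewrite /= in_itv /= (le_lt_trans ax xz) (lt_le_trans zy yb).
Qed.

Lemma long_interval_measurable L A : long_interval L A -> measurable A.
Proof. by move/long_interval_is_interval/measurable_realfun.is_interval_measurable. Qed.

Lemma long_interval_thicken_le L r A : 0 < L -> 0 <= r -> long_interval L A ->
  (lam (thicken A r) <= (1 + 2 * r / L)%:E * lam A)%E.
Proof.
move=> L0 r0 [a [b [Lab sab sA]]].
have thick_le : (lam (thicken A r) <= (b + r - (a - r))%:E)%E.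
  apply: (@le_trans _ _ (lam [set` `[a - r, b + r]%R])).
    apply: lebesgue_measure_le.
    move=> x [y /sA /=]; rewrite !in_itv /= => /andP[ay yb].
    by rewrite ler_norml => /andP[h1 h2]; apply/andP; split; lra.
  by rewrite lebesgue_measure_itv /= lte_fin; case: ifP => _; rewrite ?lee_fin; lra.
have le_lam : ((b - a)%:E <= lam A)%E.
  apply: le_trans (lebesgue_measure_le sab).
  by rewrite lebesgue_measure_itv /= lte_fin ifT ?EFinB //; lra.
apply: (le_trans thick_le); apply: le_trans (lee_wpmul2l _ le_lam); last first.
  by rewrite lee_fin; have := divr_ge0 (mulr_ge0 (ler0n _ 2) r0) (ltW L0); lra.
rewrite -EFinM lee_fin.
have : 2 * r / L * L <= 2 * r / L * (b - a).
  by apply: ler_wpM2l => //; apply: divr_ge0 => //; [lra | exact: ltW].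
by rewrite divfK ?gt_eqF // => ?; rewrite mulrDl mul1r; lra.
Qed.

Lemma long_intervalU L A B : long_interval L A -> long_interval L B ->
  A `&` B !=set0 -> long_interval L (A `|` B).
Proof.
move=> [a [b [Lab sA1 sA2]]] [a' [b' [Lab' sB1 sB2]]] [p [Ap Bp]].
move: (sA2 _ Ap) (sB2 _ Bp); rewrite /= !in_itv /= => /andP[ap pb] /andP[a'p pb'].
exists (Order.min a a'), (Order.max b b'); split.
- have : Order.min a a' <= a by rewrite ge_min lexx.
  have : b <= Order.max b b' by rewrite le_max lexx.
  lra.
- move=> x /=; rewrite in_itv /= gt_min lt_max => /andP[/orP xa /orP xb].
  have [xp|px|->] := ltgtP x p; last by left.
  + case: xa => xa; [left; apply: sA1|right; apply: sB1];
      by rewrite /= in_itv /= xa (lt_le_trans xp).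
  + case: xb => xb; [left; apply: sA1|right; apply: sB1];
      rewrite /= in_itv /= xb andbT.
    * exact: le_lt_trans ap px.
    * exact: le_lt_trans a'p px.
- move=> y [/sA2|/sB2]; rewrite /= !in_itv /= => /andP[h1 h2];
    by rewrite ge_min le_max h1 h2 ?orbT.
Qed.

Lemma thicken_bigsetU_le L r (As : seq (set R)) : 0 < L -> 0 <= r ->
  {in As, forall A, long_interval L A} ->
  (lam (thicken (\big[setU/set0]_(A <- As) A) r) <=
   (1 + 2 * r / L)%:E * lam (\big[setU/set0]_(A <- As) A))%E.
Proof.
move=> L0 r0; have k0 : 0 <= 1 + 2 * r / L.
  by have := divr_ge0 (mulr_ge0 (ler0n _ 2) r0) (ltW L0); lra.
move: {2}(size As) (leqnn (size As)) => n.
elim: n As => [|n IH] [|A Bs] //=; rewrite ?big_nil ?thicken0 ?measure0 ?mule0 //.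
move=> szBs hAs; have hA := hAs A (mem_head _ _).
have hBs : {in Bs, forall B, long_interval L B}.
  by move=> B BBs; apply: hAs; rewrite in_cons BBs orbT.
rewrite big_cons.
have [/hasP [B BBs /asboolP AB]|/hasPn disj] :=
  boolP (has (fun B => `[< A `&` B !=set0 >]) Bs).
  have -> : A `|` \big[setU/set0]_(C <- Bs) C =
      \big[setU/set0]_(C <- (A `|` B) :: rem B Bs) C.
    by rewrite big_cons (perm_big _ (perm_to_rem BBs)) big_cons setUA.
  apply: IH.
    rewrite /= size_rem // prednK // lt0n size_eq0.
    by apply: contraTneq BBs => ->.
  move=> C; rewrite in_cons => /orP[/eqP ->|/mem_rem]; last exact: hBs.
  exact: long_intervalU (hBs _ BBs) AB.
have AUBs0 : A `&` \big[setU/set0]_(C <- Bs) C = set0.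
  apply/seteqP; split => x // [Ax /in_bigsetU_seq [B BBs Bx]].
  by have /asboolPn := disj B BBs; apply; exists x.
have mA := long_interval_measurable hA.
have mBs : measurable (\big[setU/set0]_(C <- Bs) C).
  by rewrite big_seq; apply: bigsetU_measurable => B /hBs /long_interval_measurable.
rewrite thickenU [X in (_ <= _ * X)%E]measureU //.
apply: (le_trans (lebesgue_measureU2_le _ _)); rewrite ge0_muleDr //.
by apply: leeD; [exact: long_interval_thicken_le|apply: IH].
Qed.

Lemma bounded_interval_long L A c m : 0 < L -> is_interval A ->
  (forall x, A x -> `|x| <= m) -> (forall x, c < x < c + L -> A x) ->
  long_interval L A.
Proof.
move=> L0 iA bA cA.
have Am : A (c + L / 2) by apply: cA; apply/andP; split; lra.
have hub : has_ubound A by exists m => x /bA; rewrite ler_norml => /andP[].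
have hlb : has_lbound A by exists (- m) => x /bA; rewrite ler_norml => /andP[].
have hs : has_sup A by split => //; exists (c + L / 2).
have hi : has_inf A by split => //; exists (c + L / 2).
have mid_sup : c + L / 2 <= sup A := ub_le_sup hub Am.
have inf_mid : inf A <= c + L / 2 := ge_inf hlb Am.
exists (inf A), (sup A); split.
- have cL_sup : c + L <= sup A.
    rewrite leNgt; apply/negP => hlt.
    have hz : A ((sup A + c + L) / 2) by apply: cA; apply/andP; split; lra.
    have := ub_le_sup hub hz; lra.
  have inf_c : inf A <= c.
    rewrite leNgt; apply/negP => hlt.
    have hz : A ((c + inf A) / 2) by apply: cA; apply/andP; split; lra.
    have := ge_inf hlb hz; lra.
  lra.
- move=> x /=; rewrite in_itv /= => /andP[ix xs].
  have [e Ae he] := @sup_adherent _ A (sup A - x) ltac:(by rewrite subr_gt0) hs.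
  have [e' Ae' he'] := @inf_adherent _ A (x - inf A) ltac:(by rewrite subr_gt0) hi.
  by apply: (iA e' e) => //; apply/andP; split; apply: ltW; lra.
- by move=> x Ax /=; rewrite in_itv /= (ge_inf hlb Ax) (ub_le_sup hub Ax).
Qed.

Lemma long_interval_affine L A k c : 0 < k -> long_interval L A ->
  long_interval (k * L) ((fun x => k * x + c) @` A).
Proof.
move=> k0 [a [b [Lab sab sA]]].
exists (k * a + c), (k * b + c); split.
- by rewrite opprD addrACA subrr addr0 -mulrBr ler_pM2l.
- move=> x /=; rewrite in_itv /= => /andP[ax xb].
  exists ((x - c) / k); last by rewrite mulrC divfK ?gt_eqF // subrK.
  apply: sab; rewrite /= in_itv /= ltr_pdivlMr ?ltr_pdivrMr //.
  by rewrite [a * k]mulrC [b * k]mulrC; apply/andP; split; lra.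
- move=> _ [x /sA + <-]; rewrite /= !in_itv /= => /andP[ax xb].
  by rewrite !lerD2r !ler_pM2l // ax xb.
Qed.

End LongIntervals.

Section IntegralScale.
Context d (T : measurableType d) (R : realType) (mu : {measure set T -> \bar R}).
Import HBNNSimple.
Local Open Scope ereal_scope.

(* No measurability is assumed: the nonnegative integral is a supremum over
   simple functions below the integrand, and [k^-1 *: h] is below [f]
   whenever [h] is below [g]. *)
Lemma ge0_le_integral_scale (D : set T) (f g : T -> \bar R) (k : R) : (0 < k)%R ->
  (forall x, D x -> 0 <= f x) -> (forall x, D x -> 0 <= g x) ->
  (forall x, D x -> g x <= k%:E * f x) ->
  \int[mu]_(x in D) g x <= k%:E * \int[mu]_(x in D) f x.
Proof.
move=> k0 f0 g0 gf; rewrite !ge0_integralE //.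
apply: ge_ereal_sup => _ [h /= hg <-].
have ik0 : (0 <= k^-1)%R by rewrite invr_ge0 ltW.
pose h' := scale_nnsfun h ik0.
have -> : sintegral mu h = k%:E * sintegral mu h'.
  rewrite -sintegralrM; congr (sintegral mu _); apply/funext => x /=.
  by rewrite mulrA mulfV ?gt_eqF // mul1r.
rewrite lee_pmul2l ?lte_fin //; apply: ereal_sup_ubound; exists h' => // x /=.
have := hg x; rewrite /patch; case: ifP => [/[1!inE] Dx hgx|_ hx].
  have := lee_wpmul2l (ik0 : 0 <= (k^-1)%:E) (le_trans hgx (gf x Dx)).
  by rewrite muleA -[(k^-1)%:E * k%:E]EFinM mulVf ?gt_eqF // mul1e EFinM.
have -> : h x = 0%R by apply/le_anti; rewrite fun_ge0 -lee_fin hx.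
by rewrite mulr0.
Qed.

End IntegralScale.

Section Plane.
Variable R : realType.
Implicit Types (t c : R) (v x y : R * R).

Lemma proj_homot t c v x :
  Defs.proj t (homot c v x) = c * Defs.proj t x + Defs.proj t v.
Proof. by rewrite /Defs.proj /homot /=; ring. Qed.

Lemma edist_homot c v x y : 0 <= c ->
  Defs.edist (homot c v x) (homot c v y) = c * Defs.edist x y.
Proof.
move=> c0; rewrite /Defs.edist /homot /=.
have -> : (c * x.1 + v.1 - (c * y.1 + v.1)) ^+ 2 + (c * x.2 + v.2 - (c * y.2 + v.2)) ^+ 2
    = c ^+ 2 * ((x.1 - y.1) ^+ 2 + (x.2 - y.2) ^+ 2) by ring.
by rewrite sqrtrM ?sqr_ge0 // sqrtr_sqr ger0_norm.
Qed.

Lemma proj_lipschitz t x y : `|Defs.proj t x - Defs.proj t y| <= Defs.edist x y.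
Proof.
rewrite /Defs.edist -sqrtr_sqr; apply: ler_wsqrtr.
set d1 := x.1 - y.1; set d2 := x.2 - y.2.
have -> : Defs.proj t x - Defs.proj t y = - sin t * d1 + cos t * d2.
  by rewrite /Defs.proj /d1 /d2; ring.
have -> : d1 ^+ 2 + d2 ^+ 2 = (- sin t * d1 + cos t * d2) ^+ 2 + (cos t * d1 + sin t * d2) ^+ 2.
  by rewrite -[LHS]mul1r -(cos2Dsin2 t) /d1 /d2; ring.
by rewrite lerDl sqr_ge0.
Qed.

Lemma edist_le_norm1 x y : Defs.edist x y <= `|x.1 - y.1| + `|x.2 - y.2|.
Proof.
rewrite /Defs.edist; set u := x.1 - y.1; set v := x.2 - y.2.
apply: (@le_trans _ _ (Num.sqrt ((`|u| + `|v|) ^+ 2))); last first.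
  by rewrite sqrtr_sqr ger0_norm ?addr_ge0.
apply: ler_wsqrtr; rewrite [in X in _ <= X]sqrrD.
rewrite -(real_normK (num_real u)) -(real_normK (num_real v)).
by have := mulr_ge0 (normr_ge0 u) (normr_ge0 v); lra.
Qed.

Lemma compact_coord_bounded (A : set (R * R)) : compact A ->
  exists M : R, forall x, A x -> `|x.1| <= M /\ `|x.2| <= M.
Proof.
move=> /compact_bounded [M0 [_ hM]]; exists (M0 + 1) => x.
move/(hM (M0 + 1)); rewrite ltrDl ltr01 => /(_ isT).
by rewrite /= prod_normE => h; split; apply: le_trans h; rewrite le_max lexx ?orbT.
Qed.

Lemma edist_le_diam (A : set (R * R)) x y : compact A -> A x -> A y ->
  Defs.edist x y <= diam A.
Proof.
move=> cA Ax Ay; have [M hM] := compact_coord_bounded cA.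
apply: ub_le_sup; last by exists x => //; exists y.
exists (4 * M) => _ [u Au [w Aw <-]].
apply: (le_trans (edist_le_norm1 u w)).
have [h1 h2] := hM u Au; have [h3 h4] := hM w Aw.
have := ler_normB u.1 w.1; have := ler_normB u.2 w.2.
lra.
Qed.

Lemma continuous_proj t : continuous (Defs.proj t).
Proof.
move=> x; apply: cvgD; apply: cvgM (cvg_cst _) _; [exact: cvg_fst|exact: cvg_snd].
Qed.

Lemma continuous_homot c v : continuous (homot c v).
Proof.
move=> x; rewrite /homot.
exact: (cvg_pair (cvgD (cvgM (cvg_cst c) (@cvg_fst _ _ _ _ _)) (cvg_cst v.1))
                 (cvgD (cvgM (cvg_cst c) (@cvg_snd _ _ _ _ _)) (cvg_cst v.2))).
Qed.

End Plane.

Section Pieces.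
Variables (R : realType) (rho : R) (conf : seq nat -> config R).
Local Notation g := (gmap rho conf).

Definition valid_word (w : seq nat) := valid_rev conf (rev w).

Lemma valid_word_rcons w i :
  valid_word (rcons w i) = (i < size (conf w))%N && valid_word w.
Proof. by rewrite /valid_word rev_rcons /= revK. Qed.

Lemma gmap_rcons w i x : g (rcons w i) x = g w (homot rho (nth (0, 0) (conf w) i) x).
Proof.
rewrite /gmap rev_rcons /= revK size_rcons size_rev /homot /=.
by congr pair; rewrite exprS; ring.
Qed.

Lemma gmapE w x : g w x = homot (rho ^+ size w) (g w (0, 0)) x.
Proof. by rewrite /gmap /homot /= !mulr0 !add0r. Qed.

Lemma proj_gmap t w x :
  Defs.proj t (g w x) = rho ^+ size w * Defs.proj t x + Defs.proj t (g w (0, 0)).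
Proof. by rewrite gmapE proj_homot. Qed.

Lemma continuous_gmap w : continuous (g w).
Proof. by rewrite (funext (gmapE w)); exact: continuous_homot. Qed.

Variable J0 : set (R * R).
Hypothesis homot_sub : forall u i, (i < size (conf u))%N ->
  homot rho (nth (0, 0) (conf u) i) @` J0 `<=` J0.

Lemma gmap_cat_sub u v : valid_word (u ++ v) ->
  valid_word u /\ g (u ++ v) @` J0 `<=` g u @` J0.
Proof.
elim/last_ind: v => [|v i IH]; first by rewrite cats0 => vu; split.
rewrite -rcons_cat valid_word_rcons => /andP[iv /IH [vu sub]]; split => //.
move=> _ [a Ja <-]; apply: sub; rewrite gmap_rcons.
by exists (homot rho (nth (0, 0) (conf (u ++ v)) i) a) => //; apply: (homot_sub iv); exists a.
Qed.

End Pieces.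

Lemma nested_closed_bigcap_neq0 (T : topologicalType) (B : nat -> set T) :
  compact (B 0%N) -> (forall k, closed (B k)) -> (forall k, B k.+1 `<=` B k) ->
  (forall k, B k !=set0) -> exists x, forall k, B k x.
Proof.
move=> cB0 clB Bdec B0.
have Bmono i j : (i <= j)%N -> B j `<=` B i.
  move=> /subnK <-; elim: (j - i)%N => [|k IH] //.
  by rewrite addSn; apply: subset_trans IH; exact: Bdec.
pose F := filter_from [set: nat] B.
have FF : Filter F.
  apply: filter_from_filter; first by exists 0%N.
  move=> i j _ _; exists (maxn i j) => // z Bz.
  by split; [apply: (Bmono i _ (leq_maxl i j))|apply: (Bmono j _ (leq_maxr i j))].
have PF : ProperFilter F by apply: filter_from_proper => k _; exact: B0.
have [x [_ clx]] : B 0%N `&` cluster F !=set0 by apply: cB0; exists 0%N.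
by exists x => k; apply: clB => N Nx; apply: (clx (B k) N) => //; exists k.
Qed.

Section Limit.
Variables (R : realType) (J0 : set (R * R)) (rho : R) (conf : seq nat -> config R).
Hypothesis J0_compact : compact J0.
Hypothesis rho_gt0 : 0 < rho.
Hypothesis homot_sub : forall u i, (i < size (conf u))%N ->
  homot rho (nth (0, 0) (conf u) i) @` J0 `<=` J0.
Hypothesis conf_neq0 : forall u, (0 < size (conf u))%N.
Local Notation g := (gmap rho conf).

Lemma compact_piece w : compact (g w @` J0).
Proof. by apply: continuous_compact => //; exact/continuous_subspaceT/continuous_gmap. Qed.

Lemma piece_meets_Slim w a : valid_word conf w -> J0 a ->
  exists2 x, Slim J0 rho conf x & (g w @` J0) x.
Proof.
move=> vw Ja; pose wk k := w ++ nseq k 0%N.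
have vwk k : valid_word conf (wk k).
  elim: k => [|k IH]; first by rewrite /wk cats0.
  by rewrite /wk -addn1 nseqD catA cats1 valid_word_rcons conf_neq0.
pose B k := g (wk k) @` J0.
have Bdec k : B k.+1 `<=` B k.
  have := gmap_cat_sub homot_sub (u := wk k) (v := [:: 0%N]).
  by rewrite /wk -catA -[[:: 0%N]]/(nseq 1 0%N) -nseqD addn1 => /(_ (vwk k.+1)) [].
have clB k : closed (B k).
  by apply: (compact_closed (@norm_hausdorff _ _)); exact: compact_piece.
have [x Bx] : exists x, forall k, B k x.
  have cB0 : compact (B 0%N) by exact: compact_piece.
  apply: (nested_closed_bigcap_neq0 cB0 clB Bdec) => k.
  by exists (g (wk k) a); exists a.
have Bw : B 0%N `<=` g w @` J0 by rewrite /B /wk cats0.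
exists x; last exact: Bw.
move=> m _; have [wm|mw] := leqP (size w) m.
  exists (wk (m - size w)%N); last exact: Bx.
  by split; [rewrite size_cat size_nseq subnKC|exact: vwk].
have := gmap_cat_sub homot_sub (u := take m w) (v := drop m w).
rewrite cat_take_drop => /(_ vw) [vt sub]; exists (take m w); last exact/sub/Bw/Bx.
by split => //; rewrite size_take mw.
Qed.

Lemma Sn_sub_nbhd_Slim n r : diam J0 * rho ^+ n <= r ->
  Sn J0 rho conf n `<=` nbhd_set (Slim J0 rho conf) r.
Proof.
move=> hr _ [w [sw vw] [a Ja <-]].
have [x Sx [b Jb gbx]] := piece_meets_Slim vw Ja.
have rho_n_ge0 : 0 <= rho ^+ size w by rewrite exprn_ge0 ?ltW.
exists x => //; rewrite -gbx [g w a]gmapE [g w b]gmapE edist_homot // sw mulrC.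
by apply: le_trans hr; rewrite ler_wpM2r -?sw // edist_le_diam.
Qed.

End Limit.

Section Components.
Context {R : realType} {T : pseudoMetricType R}.

Lemma uniform_ball_radius (s : seq (set T)) :
  (forall C, C \in s -> exists2 e : R, 0 < e & exists y, ball y e `<=` C) ->
  exists2 d : R, 0 < d & forall C, C \in s -> exists y, ball y d `<=` C.
Proof.
elim: s => [|C s IH] hs; first by exists 1 => // C; rewrite in_nil.
have [e e0 [y hy]] := hs C (mem_head _ _).
have [d d0 hd] := IH (fun D Ds => hs D (mem_behead (Ds : D \in behead (C :: s)))).
exists (Order.min e d); first by rewrite lt_min e0 d0.
move=> D; rewrite in_cons => /predU1P[->|/hd [z hz]].
  by exists y; apply: subset_trans hy; apply: le_ball; rewrite ge_min lexx.
by exists z; apply: subset_trans hz; apply: le_ball; rewrite ge_min lexx orbT.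
Qed.

Variable J0 : set T.
Hypotheses (J0_closed : closed J0) (J0_regular : closure (interior J0) = J0).
Hypothesis J0_components : finite_set [set connected_component J0 x | x in J0].

(* Points of the interior close to [x0] avoid the union of the other
   components, which is closed since there are finitely many. *)
Lemma component_contains_ball x0 : J0 x0 ->
  exists2 e : R, 0 < e & exists y, ball y e `<=` connected_component J0 x0.
Proof.
move=> Jx0; set C0 := connected_component J0 x0.
pose Others := \bigcup_(C in [set C | [set connected_component J0 x | x in J0] C /\ ~ C x0]) C.
have Others_closed : closed Others.
  apply: closed_bigcup => [|_ [[x Jx <-] _]]; last exact: component_closed.
  by apply: sub_finite_set J0_components => C [].
have notOthers_sub : J0 `&` ~` Others `<=` C0.
  move=> z [Jz notOz]; apply: contrapT => C0z; apply: notOz.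
  exists (connected_component J0 z); last exact: connected_component_refl.
  split; first by exists z.
  move=> /same_connected_component Czx0; apply: C0z.
  by rewrite /C0 -Czx0; exact: connected_component_refl.
have x0_notOthers : nbhs x0 (~` Others).
  apply: open_nbhs_nbhs; split; first exact: closed_openC.
  by move=> [C [_ nCx0]]; apply: nCx0.
have [y [iy notOy]] : interior J0 `&` ~` Others !=set0.
  have clx0 : closure (interior J0) x0 by rewrite J0_regular.
  exact: clx0 _ x0_notOthers.
have /nbhs_ballP [e e0 he] : nbhs y (interior J0 `&` ~` Others).
  apply: open_nbhs_nbhs; split => //.
  exact: openI (@open_interior _ J0) (closed_openC Others_closed).
exists e => //; exists y => z /he [/interior_subset Jz notOz]; exact: notOthers_sub.
Qed.

Lemma components_uniform_ball : exists2 d : R, 0 < d &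
  exists Cs : seq (set T), J0 = \big[setU/set0]_(C <- Cs) C /\
    forall C, C \in Cs -> [/\ C `<=` J0, connected C & exists y, ball y d `<=` C].
Proof.
have [s hs] := (finite_seqP _).1 J0_components.
have inS C : C \in s <-> exists2 x, J0 x & connected_component J0 x = C.
  by have := congr1 (fun P => P C) hs => /= ->; split.
have [|d d0 hd] := uniform_ball_radius (s := s).
  by move=> C /inS [x Jx <-]; exact: component_contains_ball.
exists d => //; exists s; split => [|C /inS [x Jx <-]]; last first.
  split; [exact: connected_component_sub|exact: component_connected|].
  by apply: hd; apply/inS; exists x.
apply/seteqP; split => [x Jx|x /in_bigsetU_seq [C /inS [z Jz <-]]].
  apply/in_bigsetU_seq; exists (connected_component J0 x); last exact: connected_component_refl.
  by apply/inS; exists x.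
exact: connected_component_sub.
Qed.

End Components.

Lemma proj_component_long (R : realType) (J0 C : set (R * R)) (t d : R) y :
  compact J0 -> 0 < d -> C `<=` J0 -> connected C -> ball y d `<=` C ->
  long_interval (2 * d) (Defs.proj t @` C).
Proof.
move=> cJ d0 CJ connC yC; have [M hM] := compact_coord_bounded cJ.
apply: (@bounded_interval_long _ _ _ (Defs.proj t y - d) (M + M)).
- by rewrite mulr_gt0.
- apply/connected_intervalP; apply: connected_continuous_connected => //.
  exact/continuous_subspaceT/continuous_proj.
- move=> _ [x /CJ /hM [x1M x2M] <-]; rewrite /Defs.proj.
  apply: (le_trans (ler_normD _ _)); rewrite !normrM normrN.
  by apply: lerD; rewrite -[X in _ <= X]mul1r ler_pM // ?sin_max ?cos_max.
- move=> u /andP[du ud]; set s := u - Defs.proj t y.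
  have sd : `|s| < d by rewrite /s ltr_norml; apply/andP; split; lra.
  exists (y.1 - s * sin t, y.2 + s * cos t).
    have small (z : R) : `|z| <= 1 -> `|s * z| < d.
      move=> z1; rewrite normrM; apply: le_lt_trans sd.
      by rewrite -[X in _ <= X]mulr1 ler_wpM2l.
    apply: yC; split; rewrite /ball /=.
    - by rewrite opprB addrC subrK; exact/small/sin_max.
    - by rewrite opprD addNKr normrN; exact/small/cos_max.
  rewrite /Defs.proj /= -[u](subrK (Defs.proj t y)) -/s /Defs.proj.
  by rewrite -[s in RHS]mulr1 -(cos2Dsin2 t); ring.
Qed.

Fixpoint words (M n : nat) : seq (seq nat) :=
  if n is n'.+1 then [seq rcons w i | w <- words M n', i <- iota 0 M] else [:: [::]].

Lemma size_words M n w : w \in words M n -> size w = n.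
Proof.
elim: n w => [|n IH] w /=; first by rewrite inE => /eqP ->.
by move=> /allpairsP [[u i] [/= /IH <- _ ->]]; rewrite size_rcons.
Qed.

Lemma mem_words (R : realType) (conf : seq nat -> config R) M n w :
  (forall u, (size (conf u) <= M)%N) -> size w = n -> valid_word conf w ->
  w \in words M n.
Proof.
move=> conf_le; elim: n w => [|n IH] w /=; first by move/size0nil ->; rewrite inE.
case/lastP: w => [//|u i]; rewrite size_rcons => -[su].
rewrite valid_word_rcons => /andP[iu vu].
by apply: allpairs_f; [exact: IH|rewrite mem_iota add0n (leq_trans iu)].
Qed.

Section ProjectionBound.
Variables (R : realType) (J0 : set (R * R)) (rho : R) (conf : seq nat -> config R).
Variables (e : R) (Cs : seq (set (R * R))) (M : nat).
Hypotheses (J0_compact : compact J0) (rho_gt0 : 0 < rho) (e_gt0 : 0 < e).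
Hypothesis J0E : J0 = \big[setU/set0]_(C <- Cs) C.
Hypothesis Cs_ball : forall C, C \in Cs ->
  [/\ C `<=` J0, connected C & exists y, ball y e `<=` C].
Hypothesis conf_le : forall u, (size (conf u) <= M)%N.
Local Notation g := (gmap rho conf).
Local Notation lam := (@lebesgue_measure R).

Lemma proj_piece_long t w C : C \in Cs ->
  long_interval (2 * e * rho ^+ size w) (Defs.proj t @` (g w @` C)).
Proof.
move=> /Cs_ball [CJ connC [y yC]].
pose aff x := rho ^+ size w * x + Defs.proj t (g w (0, 0)).
have -> : Defs.proj t @` (g w @` C) = aff @` (Defs.proj t @` C).
  by rewrite !image_comp; congr image; apply/funext => x /=; rewrite proj_gmap.
rewrite mulrC; apply: long_interval_affine; first by rewrite exprn_gt0.
exact: proj_component_long J0_compact e_gt0 CJ connC yC.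
Qed.

Lemma proj_nbhd_Slim_le t n eps r : 0 < eps -> 0 < r <= eps * rho ^+ n ->
  (lam (Defs.proj t @` nbhd_set (Slim J0 rho conf) r) <=
   (1 + e^-1 * eps)%:E * lam (Defs.proj t @` Sn J0 rho conf n))%E.
Proof.
move=> eps_gt0 /andP[r_gt0 r_le].
set L := 2 * e * rho ^+ n.
have L_gt0 : 0 < L by rewrite !mulr_gt0 ?exprn_gt0.
set As := [seq Defs.proj t @` (g w @` C) | w <- [seq w <- words M n | valid_word conf w], C <- Cs].
have As_long : {in As, forall A, long_interval L A}.
  move=> A /allpairsP [[w C] [/=]]; rewrite mem_filter => /andP[_ /size_words sw] CCs ->.
  by rewrite /L -sw; exact: proj_piece_long.
have nbhd_sub : Defs.proj t @` nbhd_set (Slim J0 rho conf) r `<=`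
    thicken (\big[setU/set0]_(A <- As) A) r.
  move=> _ [x [s Ss xs] <-].
  have [w [sw vw] [a Ja gas]] := Ss n I; subst s.
  move: Ja; rewrite J0E => /in_bigsetU_seq [C CCs Ca].
  exists (Defs.proj t (g w a)); last exact: le_trans (proj_lipschitz _ _ _) xs.
  apply/in_bigsetU_seq; exists (Defs.proj t @` (g w @` C)); last by exists (g w a) => //; exists a.
  apply: (allpairs_f (fun w C => Defs.proj t @` (g w @` C))) => //.
  by rewrite mem_filter; apply/andP; split => //; exact: mem_words.
have As_sub : \big[setU/set0]_(A <- As) A `<=` Defs.proj t @` Sn J0 rho conf n.
  move=> _ /in_bigsetU_seq [_ /allpairsP [[w C] [/= wW CCs ->]] [_ [a Ca <-] <-]].
  move: wW; rewrite mem_filter => /andP[vw /size_words sw].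
  exists (g w a) => //; exists w => //; exists a => //.
  by have [CJ _ _] := Cs_ball CCs; exact: CJ.
apply: le_trans (lebesgue_measure_le nbhd_sub) _.
apply: le_trans (thicken_bigsetU_le L_gt0 (ltW r_gt0) As_long) _.
apply: lee_pmul => //.
- by rewrite lee_fin; have := divr_ge0 (mulr_ge0 (ler0n _ 2) (ltW r_gt0)) (ltW L_gt0); lra.
- rewrite lee_fin lerD2l ler_pdivrMr //.
  have -> : e^-1 * eps * L = 2 * (eps * rho ^+ n) by rewrite /L; field; rewrite gt_eqF.
  lra.
- exact: lebesgue_measure_le.
Qed.

End ProjectionBound.

Unset Implicit Arguments.

Theorem lemma3p2 (R : realType) (J0 : set (R * R)%type) (rho : R)
  (d : measure_display) (Omega : measurableType d)
  (P : probability Omega R) (X : Omega -> config R) :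
  (* J0: compact, closure of its interior, finitely many connected components *)
  compact J0 ->
  closure (interior J0) = J0 ->
  finite_set [set connected_component J0 x | x in J0] ->
  (* contraction ratio *)
  0 < rho < 1 ->
  (* L is a bounded random variable *)
  measurable_fun setT (fun w => (size (X w))%:R : R) ->
  (exists M : nat, forall w, (size (X w) <= M)%N) ->
  (* h_i(J0) subset of J0 *)
  (forall w i, (i < size (X w))%N ->
     homot rho (nth (0, 0) (X w) i) @` J0 `<=` J0) ->
  (* E[L] = 1/rho *)
  (\int[P]_w ((size (X w))%:R : R)%:E = (rho^-1)%:E)%E ->
  (* surviving: L >= 1 almost surely *)
  P [set w | (1 <= size (X w))%N] = 1%E ->
  (* statement for every realization: every node receives a value of X with L >= 1 *)
  (forall conf : seq nat -> config R,
     (forall u, range X (conf u) /\ (1 <= size (conf u))%N) ->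
     forall (n : nat) (r : R), diam J0 * rho ^+ n <= r ->
       (Fav (Sn J0 rho conf n) <= Fav (nbhd_set (Slim J0 rho conf) r))%E)
  /\
  (exists C eps0 : R, 0 < C /\ 0 < eps0 /\
     forall conf : seq nat -> config R,
     (forall u, range X (conf u) /\ (1 <= size (conf u))%N) ->
     forall (n : nat) (eps r : R), 0 < eps <= eps0 -> 0 < r <= eps * rho ^+ n ->
       (Fav (nbhd_set (Slim J0 rho conf) r) <= (1 + C * eps)%:E * Fav (Sn J0 rho conf n))%E).
Proof.
move=> J0_compact J0_regular J0_components /andP[rho_gt0 _] _ [M X_le] X_sub _ _.
have conf_facts (conf : seq nat -> config R) :
    (forall u, range X (conf u) /\ (1 <= size (conf u))%N) ->
    [/\ forall u i, (i < size (conf u))%N ->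
          homot rho (nth (0, 0) (conf u) i) @` J0 `<=` J0,
        forall u, (0 < size (conf u))%N &
        forall u, (size (conf u) <= M)%N].
  move=> hc; split=> [u i|u|u]; have [[w _ <-] ?] := hc u => //; exact: X_sub.
split.
  move=> conf /conf_facts [conf_sub conf_neq0 _] n r r_ge.
  rewrite /Fav -[X in (_ <= X)%E]mul1e; apply: ge0_le_integral_scale => // t _.
  rewrite mul1e; apply/lebesgue_measure_le/image_subset.
  exact: Sn_sub_nbhd_Slim.
have J0_closed : closed J0 := compact_closed (@norm_hausdorff _ _) J0_compact.
have [e e_gt0 [Cs [J0E Cs_ball]]] :=
  components_uniform_ball J0_closed J0_regular J0_components.
exists e^-1, 1; split; first by rewrite invr_gt0.
split=> // conf /conf_facts [_ _ conf_le] n eps r /andP[eps_gt0 _] r_le.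
rewrite /Fav; apply: ge0_le_integral_scale => // [|t _].
- by have := divr_ge0 (ltW eps_gt0) (ltW e_gt0); rewrite mulrC; lra.
- exact: (proj_nbhd_Slim_le J0_compact rho_gt0 e_gt0 J0E Cs_ball conf_le t eps_gt0 r_le).
Qed.
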